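(* Let $m$ be a positive integer and let $S_1,\dots,S_{k-1}$ be pairwise disjoint subsets of $\mathbb{F}_2^m$, and let $d=\dim(\bigcup_iS_i)$. Then $\langle\mathcal{X}^4_{\overline{(S_1,\dots,S_{k-1})}}\rangle\le 2^{2dm+8d^2}B^{2^{d+2}}$, where $B=\max_{i,\epsilon,z}|\mathcal{X}^{(i)}(\epsilon,z)|$.
   Context: Consider a BMS channel with finitely many noise levels: for each input bit $X_x$, the channel independently draws $\epsilon_x\in[0,1/2]$ from a fixed distribution with finite support, draws $Z_x\in\mathbb{F}_2$ equal to $1$ with probability $\epsilon_x$, and outputs $(\epsilon_x,X_x+Z_x)$. Let $k$ be the number of possible pairs $(\epsilon_x,Z_x)$ and $\nu$ their joint distribution. Let $\mathcal{X}^{(0)},\dots,\mathcal{X}^{(k-1)}$ be functions from these pairs to $\mathbb{R}$ that are orthonormal in $L^2(\nu)$, with $\mathcal{X}^{(0)}\equiv1$. For pairwise disjoint $S_1,\dots,S_{k-1}\subseteq\mathbb{F}_2^m$, $\mathcal{X}_{(S_1,\dots,S_{k-1})}(\epsilon,Z)=\prod_{i=1}^{k-1}\prod_{x\in S_i}\mathcal{X}^{(i)}(\epsilon_x,Z_x)$, a function of $(\epsilon_x,Z_x)_{x\in\mathbb{F}_2^m}$. $\langle g\rangle$ is the expectation of $g$ when $(\epsilon_x,Z_x)_{x\in\mathbb{F}_2^m}$ are i.i.d. with law $\nu$. $\overline{(S_1,\dots,S_{k-1})}$ is the set of distinct tuples $(\pi(S_1),\dots,\pi(S_{k-1}))$ over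 invertible linear maps $\pi$ of $\mathbb{F}_2^m$, and $\mathcal{X}_{\overline{(S_1,\dots,S_{k-1})}}$ is the sum of $\mathcal{X}_{T}$ over tuples $T$ in this set. $\dim$ denotes the dimension of the linear span in $\mathbb{F}_2^m$. *)

From HB Require Import structures.
From mathcomp Require Import all_boot all_order all_algebra.
Set Implicit Arguments. Unset Strict Implicit. Unset Printing Implicit Defensive.
Import Order.TTheory GRing.Theory Num.Theory.
Local Open Scope ring_scope.

Notation F2m m := 'rV['F_2]_m.

(* joint law nu of the pair (eps_x, Z_x): noise level labels l : L with
   value eps l, probability p l; Z = true (i.e. 1) with probability eps l. *)
Definition nu (R : realFieldType) (L : finType) (eps p : L -> R) (q : L * bool) : R :=
  p q.1 * (if q.2 then eps q.1 else 1 - eps q.1).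

Definition iid_expect (R : realFieldType) (L : finType) (eps p : L -> R) (m : nat)
  (g : {ffun F2m m -> L * bool} -> R) : R :=
  \sum_(w : {ffun F2m m -> L * bool}) (\prod_(x : F2m m) nu eps p (w x)) * g w.

(* X_{(T_1,..,T_{k-1})}; T j corresponds to S_{j+1}, paired with X^(j+1) *)
Definition X_tuple (R : realFieldType) (L : finType) (X : nat -> L * bool -> R)
  (m n : nat) (T : {ffun 'I_n -> {set F2m m}}) (w : {ffun F2m m -> L * bool}) : R :=
  \prod_(j < n) \prod_(x in T j) X j.+1 (w x).

Definition orbit_tuples (m n : nat) (S : {ffun 'I_n -> {set F2m m}}) :
  {set {ffun 'I_n -> {set F2m m}}} :=
  [set [ffun j => (fun x : F2m m => x *m A) @: S j] | A in [pred A : 'M['F_2]_m | A \in unitmx]].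

Definition X_orbit (R : realFieldType) (L : finType) (X : nat -> L * bool -> R)
  (m n : nat) (S : {ffun 'I_n -> {set F2m m}}) (w : {ffun F2m m -> L * bool}) : R :=
  \sum_(T in orbit_tuples S) X_tuple X T w.

Definition span_dim (m : nat) (U : {set F2m m}) : nat := \dim (<<enum U>>%VS).

(* Expanding the fourth power, the moment is a sum over quadruples (T_1, .., T_4)
   of orbit tuples of the expectation of prod_t X_(T_t), which factorizes over
   the points x of F_2^m.  If some x lies in exactly one cell T_t(j), its factor
   is <X^(j+1)> = <X^(j+1), X^(0)> = 0.  Otherwise the term is at most
   B^(4 2^d), since every tuple covers at most 2^d points.
   A surviving quadruple T_t = pi_t(S) is determined by the images under the
   pi_t of a basis of V = span(U S_i), and these 4d vectors lie in a subspace of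
   dimension at most 2d: the map (c_t)_t |-> sum_t pi_t(c_t) on V^4 has a kernel
   of dimension at least 2d, since the double covering provides relations
   pi_t(x) = pi_s(x'), each supported on two coordinates, whose projections on
   every coordinate span V.  Choosing a basis of that subspace and the
   coordinates of the 4d vectors leaves at most 2^(2dm) 2^(8d^2) quadruples. *)

From HB Require Import structures.
From mathcomp Require Import all_boot all_order all_algebra.
From mathcomp Require Import zify lra.
Set Implicit Arguments. Unset Strict Implicit. Unset Printing Implicit Defensive.
Import Order.TTheory GRing.Theory Num.Theory.
Local Open Scope ring_scope.

Section SupportDimension.

Variables (K : fieldType) (I : finType) (vT : vectType K).

Lemma memv_span_app (rs : seq {ffun I -> vT}) r u :
  r \in <<rs>>%VS -> r u \in <<[seq s u | s : {ffun I -> vT} <- rs]>>%VS.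
Proof.
move=> /(coord_span (X := in_tuple rs)) ->; rewrite sum_ffunE.
apply: memv_suml => i _; rewrite ffunE; apply/memvZ/memv_span.
by apply/mapP; exists (in_tuple rs)`_i => //; apply: mem_nth.
Qed.

Lemma sum_dim_span_app_le (n : nat) (rs : seq {ffun I -> vT}) :
  (forall r, r \in rs -> (#|[pred u | r u != 0%R]| <= n)%N) ->
  (\sum_u \dim <<[seq r u | r : {ffun I -> vT} <- rs]>>%VS <= n * \dim <<rs>>%VS)%N.
Proof.
elim: rs => [|r rs IH] Hsupp.
  by rewrite big1 // => u _; rewrite span_nil dimv0.
have {}IH := IH (fun s hs => Hsupp s (mem_behead (s := r :: rs) hs)).
rewrite /= span_cons; have [r_in | r_notin] := boolP (r \in <<rs>>%VS).
  rewrite (addv_idPr _) -?memvE //; apply: leq_trans IH; apply: leq_sum => u _.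
  by rewrite span_cons (addv_idPr _) // -memvE memv_span_app.
rewrite dimv_disjoint_sum; last first.
  apply/eqP; rewrite -subv0; apply/subvP => x /memv_capP [/vlineP [a ->] a_r].
  rewrite memv0; have [-> | a0] := eqVneq a 0; first by rewrite scale0r.
  by move: a_r => /(memvZ a^-1); rewrite scalerA mulVf // scale1r (negbTE r_notin).
have r0 : r != 0 by apply: contraNneq r_notin => ->; apply: mem0v.
rewrite dim_vline r0 mulnDr muln1 addnC.
apply: (@leq_trans (\sum_u (\dim <<[seq s u | s : {ffun I -> vT} <- rs]>>%VS + (r u != 0%R)))%N).
  apply: leq_sum => u _; rewrite span_cons addnC.
  by rewrite (leq_trans (dimv_add_leqif _ _)) // dim_vline addnC.
rewrite big_split /= leq_add // -big_mkcond /= sum1_card.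
exact: Hsupp (mem_head _ _).
Qed.

End SupportDimension.

Section RowCombination.

Variables (K : finFieldType) (I : finType) (d m : nat) (M : I -> 'M[K]_(d, m)).

Definition rowcomb (c : {ffun I -> 'rV[K]_d}) : 'rV[K]_m := \sum_t c t *m M t.

Fact rowcomb_is_linear : linear rowcomb.
Proof.
move=> a c1 c2; rewrite /rowcomb scaler_sumr -big_split /=; apply: eq_bigr => t _.
by rewrite !ffunE mulmxDl scalemxAl.
Qed.

HB.instance Definition _ := GRing.isSemilinear.Build K {ffun I -> 'rV[K]_d} 'rV[K]_m _
  rowcomb (GRing.semilinear_linear rowcomb_is_linear).

Lemma dimv_ffun_rV : \dim {: {ffun I -> 'rV[K]_d}} = (#|I| * d)%N.
Proof.
have dim_rV : dim 'rV[K]_d = d by rewrite dim_matrix mul1r.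
by rewrite dimvf /dim /= dim_rV.
Qed.

Definition pair_relation (t s : I) (c c' : 'rV[K]_d) : {ffun I -> 'rV[K]_d} :=
  [ffun u => if u == t then c else if u == s then - c' else 0].

Lemma rowcomb_pair_relation t s c c' : s != t -> c *m M t = c' *m M s ->
  rowcomb (pair_relation t s c c') = 0.
Proof.
move=> st eq_cc'; rewrite /rowcomb (bigD1 t) //= (bigD1 s) //= big1 ?addr0.
  by rewrite !ffunE eqxx (negbTE st) eqxx mulNmx eq_cc' subrr.
by move=> u /andP [/negbTE ut /negbTE us]; rewrite ffunE ut us mul0mx.
Qed.

Lemma dim_limg_rowcomb (C : {set 'rV[K]_d}) :
  (d <= \dim <<enum C>>%VS)%N ->
  (forall t c, c \in C -> exists s c', s != t /\ c *m M t = c' *m M s) ->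
  (2 * \dim (limg (linfun rowcomb)) <= #|I| * d)%N.
Proof.
move=> C_full C_cover; set f := linfun rowcomb.
pose rels := [seq pair_relation q.1.1 q.2.1 q.1.2 q.2.2 |
  q <- enum [pred q : (I * 'rV[K]_d) * (I * 'rV[K]_d) |
             (q.2.1 != q.1.1) && (q.1.2 *m M q.1.1 == q.2.2 *m M q.2.1)]].
have rels_ker : (<<rels>> <= lker f)%VS.
  apply/span_subvP => r /mapP [[[t c] [s c']]]; rewrite mem_enum => /andP [st /eqP e] ->.
  by rewrite memv_ker lfunE /= rowcomb_pair_relation.
have rels_supp : forall r, r \in rels -> (#|[pred u | r u != 0%R]| <= 2)%N.
  move=> r /mapP [[[t c] [s c']] _ ->]; apply: leq_trans (_ : #|[set t; s]| <= 2)%N.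
    apply/subset_leq_card/subsetP => u; rewrite !inE ffunE.
    by case: (u == t); case: (u == s); rewrite ?eqxx.
  by rewrite cards2; case: (_ != _).
have rels_app_full t : (d <= \dim <<[seq r t | r : {ffun I -> 'rV[K]_d} <- rels]>>%VS)%N.
  apply: leq_trans C_full _; apply/dimvS/span_subvP => c; rewrite mem_enum => cC.
  have [s [c' [st e]]] := C_cover t c cC; apply: memv_span; apply/mapP.
  exists (pair_relation t s c c'); last by rewrite ffunE eqxx.
  by apply/mapP; exists ((t, c), (s, c')); rewrite // mem_enum inE /= st e eqxx.
have rels_dim : (#|I| * d <= 2 * \dim <<rels>>)%N.
  apply: leq_trans (sum_dim_span_app_le rels_supp).
  by rewrite -sum_nat_const; apply: leq_sum => t _.
have := dimvS rels_ker; have := limg_ker_dim f fullv.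
by rewrite capfv dimv_ffun_rV; lia.
Qed.

End RowCombination.

Section SubspaceCoordinates.

Variables (K : fieldType) (m : nat) (V : {vspace 'rV[K]_m}).

Definition basis_mx : 'M[K]_(\dim V, m) := \matrix_i (vbasis V)`_i.

Definition coord_rV (x : 'rV[K]_m) : 'rV[K]_(\dim V) := \row_i coord (vbasis V) i x.

Lemma coord_rVK x : x \in V -> coord_rV x *m basis_mx = x.
Proof.
move=> xV; rewrite mulmx_sum_row {2}(coord_vbasis xV); apply: eq_bigr => i _.
by rewrite !mxE rowK.
Qed.

End SubspaceCoordinates.

Lemma dimv_limg_le (K : fieldType) (aT rT : vectType K) (f : 'Hom(aT, rT)) U :
  (\dim (f @: U) <= \dim U)%N.
Proof. by rewrite -(limg_ker_dim f U) leq_addl. Qed.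

Lemma exists_subspace_images (K : finFieldType) (I : finType) (m : nat)
    (U : {set 'rV[K]_m}) (A : I -> 'M[K]_m) :
  (forall t x, x \in U -> exists s x', [/\ s != t, x' \in U & x *m A t = x' *m A s]) ->
  exists W : {vspace 'rV[K]_m}, (2 * \dim W <= #|I| * \dim <<enum U>>%VS)%N /\
    forall t x, x \in <<enum U>>%VS -> x *m A t \in W.
Proof.
move=> U_cover; set V := <<enum U>>%VS.
have UV x : x \in U -> x \in V by move=> xU; rewrite memv_span ?mem_enum.
pose M t := basis_mx V *m A t.
exists (limg (linfun (rowcomb M))); split; last first.
  move=> t x xV; rewrite -(coord_rVK xV) -mulmxA -/(M t).
  have -> : coord_rV V x *m M t = rowcomb M [ffun u => if u == t then coord_rV V x else 0].
    rewrite /rowcomb (bigD1 t) //= big1 ?addr0 ?ffunE ?eqxx // => u /negbTE ut.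
    by rewrite ffunE ut mul0mx.
  by rewrite -lfunE memv_img ?memvf.
apply: (dim_limg_rowcomb (C := coord_rV V @: U)).
  pose g := linfun (@mulmxr K 1 _ _ (basis_mx V)).
  apply: (leq_trans _ (dimv_limg_le g _)); apply: dimvS; apply/span_subvP => x.
  rewrite mem_enum => xU; rewrite -(coord_rVK (UV x xU)) -[_ *m _]/(mulmxr _ _) -lfunE.
  by apply/memv_img/memv_span; rewrite mem_enum imset_f.
move=> t _ /imsetP [x xU ->]; have [s [x' [st x'U e]]] := U_cover t x xU.
exists s, (coord_rV V x'); split => //.
by rewrite !mulmxA !coord_rVK ?UV.
Qed.

Lemma card_subset_vspace (K : finFieldType) (m : nat) (W : {vspace 'rV[K]_m})
    (A : {set 'rV[K]_m}) :
  {subset A <= W} -> (#|A| <= #|K| ^ \dim W)%N.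
Proof.
move=> AW; pose comb (c : {ffun 'I_(\dim W) -> K}) := \sum_k c k *: (vbasis W)`_k.
have A_comb : A \subset comb @: setT.
  apply/subsetP => x xA; apply/imsetP; exists [ffun k => coord (vbasis W) k x] => //.
  by rewrite {1}(coord_vbasis (AW x xA)); apply: eq_bigr => k _; rewrite ffunE.
rewrite (leq_trans (subset_leq_card A_comb)) // (leq_trans (leq_imset_card _ _)) //.
by rewrite cardsT card_ffun card_ord.
Qed.

Lemma card_families_in_subspaces (K : finFieldType) (I : finType) (m r : nat)
    (Vs : {set {ffun I -> 'rV[K]_m}}) :
  (forall v, v \in Vs ->
     exists W : {vspace 'rV[K]_m}, (\dim W <= r)%N /\ forall i, v i \in W) ->
  (#|Vs| <= #|K| ^ (m * r + r * #|I|))%N.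
Proof.
move=> Vs_low.
pose comb (bc : {ffun 'I_r -> 'rV[K]_m} * {ffun I -> {ffun 'I_r -> K}}) :=
  [ffun i => \sum_(k < r) bc.2 i k *: bc.1 k].
have Vs_comb : Vs \subset comb @: setT.
  apply/subsetP => v /Vs_low [W [dimW vW]]; set b := vbasis W.
  pose c i (k : nat) : K :=
    if insub k : option 'I_(\dim W) is Some k' then coord b k' (v i) else 0.
  apply/imsetP; exists ([ffun k : 'I_r => b`_k], [ffun i => [ffun k : 'I_r => c i k]]) => //.
  apply/ffunP => i; rewrite ffunE /= {1}(coord_vbasis (vW i)).
  have -> : \sum_(k < \dim W) coord b k (v i) *: b`_k = \sum_(k < \dim W) c i k *: b`_k.
    by apply: eq_bigr => k _; rewrite /c valK.
  rewrite (big_ord_widen _ (fun k => c i k *: b`_k) dimW) big_mkcond /=.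
  apply: eq_bigr => k _; rewrite !ffunE; case: ifP => // k_big.
  by rewrite nth_default ?scaler0 // size_tuple leqNgt k_big.
rewrite (leq_trans (subset_leq_card Vs_comb)) // (leq_trans (leq_imset_card _ _)) //.
by rewrite cardsT card_prod !card_ffun !card_mx !card_ord mul1n -!expnM expnD.
Qed.

Section Orbits.

Variables (m n : nat) (S : {ffun 'I_n -> {set F2m m}}).
Hypothesis S_disj : forall i j, i != j -> [disjoint S i & S j].

Definition tuple_image (A : 'M['F_2]_m) : {ffun 'I_n -> {set F2m m}} :=
  [ffun j => (fun x : F2m m => x *m A) @: S j].

Definition orbit_mx (T : {ffun 'I_n -> {set F2m m}}) : 'M['F_2]_m :=
  odflt 1%:M [pick A | (A \in unitmx) && (T == tuple_image A)].

Lemma orbit_mxP T :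
  T \in orbit_tuples S -> orbit_mx T \in unitmx /\ T = tuple_image (orbit_mx T).
Proof.
move=> /imsetP [A A_unit ->]; rewrite /orbit_mx.
case: pickP => [B /andP [B_unit /eqP <-] | /(_ A)] //=.
by rewrite A_unit eqxx.
Qed.

Definition doubly_covered (r : nat) (tau : {ffun 'I_r -> {ffun 'I_n -> {set F2m m}}}) :=
  [forall x, forall t, forall j, (x \in tau t j) ==>
     [exists s, exists j', ((s, j') != (t, j)) && (x \in tau s j')]].

Definition covered_orbit_tuples (r : nat) :=
  [set tau : {ffun 'I_r -> {ffun 'I_n -> {set F2m m}}} |
     [forall t, tau t \in orbit_tuples S] && doubly_covered tau].

Let U := \bigcup_(j < n) S j.

Lemma doubly_covered_cover r (tau : {ffun 'I_r -> {ffun 'I_n -> {set F2m m}}}) :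
  tau \in covered_orbit_tuples r ->
  forall t x, x \in U -> exists s x',
    [/\ s != t, x' \in U & x *m orbit_mx (tau t) = x' *m orbit_mx (tau s)].
Proof.
rewrite inE => /andP [/forallP tau_orb /forallP tau_cov] t x /bigcupP [j _ xSj].
have [At_unit tauE] := orbit_mxP (tau_orb t); set A := orbit_mx (tau t) in At_unit tauE *.
have : x *m A \in tau t j by rewrite tauE ffunE; apply: imset_f.
move: (tau_cov (x *m A)) => /forallP /(_ t) /forallP /(_ j) /implyP H /H.
move=> /existsP [s /existsP [j' /andP [sj'_tj]]].
rewrite (proj2 (orbit_mxP (tau_orb s))) ffunE => /imsetP [x' x'Sj' e].
have [st | st] := eqVneq s t; last first.
  by exists s, x'; split => //; apply/bigcupP; exists j'.
subst s; move: e => /(can_inj (mulmxK At_unit)) x'x; subst x'.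
have j'j : j' != j by apply: contraNneq sj'_tj => ->.
by rewrite (disjointFr (S_disj j'j) x'Sj') in xSj.
Qed.

Lemma sum_card_orbit_tuple_le T :
  T \in orbit_tuples S -> (\sum_j #|T j| <= 2 ^ span_dim U)%N.
Proof.
move=> /orbit_mxP [_ ->]; apply: (@leq_trans (\sum_j #|S j|)).
  by apply: leq_sum => j _; rewrite ffunE leq_imset_card.
have -> : (\sum_j #|S j| = #|U|)%N.
  rewrite -sum1_card (partition_disjoint_bigcup _ _ S_disj).
  by apply: eq_bigr => j _; rewrite sum1_card.
apply: leq_trans (card_subset_vspace (W := <<enum U>>%VS) _) _; last by rewrite card_Fp.
by move=> x xU; rewrite memv_span ?mem_enum.
Qed.

Definition basis_images r (tau : {ffun 'I_r -> {ffun 'I_n -> {set F2m m}}}) :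
    {ffun 'I_r * 'I_(span_dim U) -> F2m m} :=
  [ffun p : 'I_r * 'I_(span_dim U) => (vbasis <<enum U>>%VS)`_p.2 *m orbit_mx (tau p.1)].

Lemma basis_images_inj r : {in covered_orbit_tuples r &, injective (@basis_images r)}.
Proof.
move=> tau1 tau2; rewrite !inE => /andP [/forallP orb1 _] /andP [/forallP orb2 _] e.
apply/ffunP => t; rewrite (proj2 (orbit_mxP (orb1 t))) (proj2 (orbit_mxP (orb2 t))).
apply/ffunP => j; rewrite !ffunE; apply: eq_in_imset => x xSj.
have xV : x \in <<enum U>>%VS.
  by rewrite memv_span // mem_enum; apply/bigcupP; exists j.
rewrite (coord_vbasis xV) !mulmx_suml; apply: eq_bigr => i _; rewrite -!scalemxAl.
by move/ffunP: e => /(_ (t, i)); rewrite !ffunE => ->.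
Qed.

Lemma card_covered_orbit_tuples r w : (r * span_dim U <= 2 * w)%N ->
  (#|covered_orbit_tuples r| <= 2 ^ (m * w + w * (r * span_dim U)))%N.
Proof.
move=> dim_le; rewrite -(card_in_imset (@basis_images_inj r)).
apply: leq_trans (card_families_in_subspaces (r := w) _) _; last first.
  by rewrite card_Fp // card_prod !card_ord.
move=> _ /imsetP [tau tau_cov ->].
have [W [dimW W_img]] := exists_subspace_images (doubly_covered_cover tau_cov).
exists W; split => [|[t i]].
  rewrite card_ord in dimW.
  by rewrite -(leq_pmul2l (isT : (0 < 2)%N)); apply: leq_trans dimW dim_le.
by rewrite /basis_images ffunE W_img // vbasis_mem // mem_nth ?size_tuple.
Qed.

End Orbits.

Section OrbitMoments.

Variables (R : realFieldType) (L : finType) (eps p : L -> R).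
Hypotheses (eps_range : forall l, 0 <= eps l <= 1 / 2) (p_gt0 : forall l, 0 < p l)
  (p_sum1 : \sum_l p l = 1).

Lemma nu_ge0 q : 0 <= nu eps p q.
Proof.
case: q => l b; have /andP [eps_ge0 eps_le] := eps_range l.
by rewrite /nu /= mulr_ge0 ?(ltW (p_gt0 l)) //; case: b => //; lra.
Qed.

Lemma sum_nu : \sum_q nu eps p q = 1.
Proof.
rewrite -p_sum1 -(pair_big xpredT xpredT (fun l b => nu eps p (l, b))) /=.
by apply: eq_bigr => l _; rewrite big_bool /nu /= -mulrDr addrC subrK mulr1.
Qed.

Lemma exists_nu_gt0 : exists q, 0 < nu eps p q.
Proof.
apply/existsP; apply: contraT => /existsPn nu_le0.
suff : \sum_q nu eps p q <= 0 by rewrite sum_nu ler10.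
by rewrite sumr_le0 // => q _; rewrite leNgt nu_le0.
Qed.

Lemma iid_expect_prod m (h : F2m m -> L * bool -> R) :
  iid_expect eps p (fun w => \prod_x h x (w x)) = \prod_x \sum_q nu eps p q * h x q.
Proof.
rewrite /iid_expect (bigA_distr_bigA (fun x q => nu eps p q * h x q)) /=.
by under eq_bigr => w _ do rewrite -big_split.
Qed.

Variables (X : nat -> L * bool -> R) (k : nat).
Hypotheses (X0_1 : forall q, 0 < nu eps p q -> X 0%N q = 1)
  (X_orth : forall i j, (i < k)%N -> (j < k)%N ->
     \sum_q nu eps p q * X i q * X j q = (i == j)%:R).

Lemma expect_X_eq0 i : (0 < i < k)%N -> \sum_q nu eps p q * X i q = 0.
Proof.
move=> /andP [i_gt0 i_lt_k]; have k_gt0 : (0 < k)%N by apply: leq_ltn_trans i_lt_k.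
rewrite -[RHS]/(false%:R : R) -(gtn_eqF i_gt0) -(X_orth i_lt_k k_gt0).
apply: eq_bigr => q _; have := nu_ge0 q; rewrite le_eqVlt => /orP [/eqP <- | nu_gt0].
  by rewrite !mul0r.
by rewrite X0_1 // mulr1.
Qed.

Definition X_bound : R :=
  \big[Num.max/0]_(i < k) \big[Num.max/0]_(q : L * bool | 0 < nu eps p q) `|X i q|.

Lemma normX_le_bound i q : (i < k)%N -> 0 < nu eps p q -> `|X i q| <= X_bound.
Proof.
move=> i_lt_k nu_gt0; apply: le_trans (le_bigmax _ _ (Ordinal i_lt_k)).
exact: (le_bigmax_cond _ _ nu_gt0).
Qed.

Lemma X_bound_ge1 : (0 < k)%N -> 1 <= X_bound.
Proof.
move=> k_gt0; have [q nu_gt0] := exists_nu_gt0.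
by rewrite -(normr1 R) -(X0_1 nu_gt0) normX_le_bound.
Qed.

Variables (m : nat) (S : {ffun 'I_k.-1 -> {set F2m m}}).
Hypothesis S_disj : forall i j, i != j -> [disjoint S i & S j].

Definition cell_weight r (tau : {ffun 'I_r -> {ffun 'I_k.-1 -> {set F2m m}}})
    (x : F2m m) (q : L * bool) : R :=
  \prod_t \prod_j (if x \in tau t j then X j.+1 q else 1).

Lemma prod_X_tuple_cells r (tau : {ffun 'I_r -> {ffun 'I_k.-1 -> {set F2m m}}}) w :
  \prod_t X_tuple X (tau t) w = \prod_x cell_weight tau x (w x).
Proof.
rewrite /cell_weight [RHS]exchange_big /=; apply: eq_bigr => t _.
by rewrite [RHS]exchange_big /=; apply: eq_bigr => j _; rewrite big_mkcond.
Qed.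

Lemma X_orbit_expn r w : X_orbit X S w ^+ r =
  \sum_(tau : {ffun 'I_r -> _} | [forall t, tau t \in orbit_tuples S])
    \prod_t X_tuple X (tau t) w.
Proof.
have -> a : a ^+ r = \prod_(t < r) a by rewrite prodr_const card_ord.
rewrite /X_orbit; under eq_bigr => t _ do rewrite big_mkcond /=.
rewrite bigA_distr_bigA /= [RHS]big_mkcond /=.
apply: eq_bigr => tau _; case: ifPn => [/forallP tau_orb | /forallPn [t t_orb]].
  by apply: eq_bigr => t _; rewrite tau_orb.
by rewrite (bigD1 t) //= (negbTE t_orb) mul0r.
Qed.

Lemma iid_expect_X_orbit_expn r :
  iid_expect eps p (fun w => X_orbit X S w ^+ r) =
  \sum_(tau : {ffun 'I_r -> _} | [forall t, tau t \in orbit_tuples S])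
    \prod_x \sum_q nu eps p q * cell_weight tau x q.
Proof.
rewrite /iid_expect; under eq_bigr => w _ do rewrite X_orbit_expn mulr_sumr.
rewrite exchange_big /=; apply: eq_bigr => tau _; rewrite -iid_expect_prod.
by apply: eq_bigr => w _; rewrite prod_X_tuple_cells.
Qed.

Lemma expect_cells_eq0 r (tau : {ffun 'I_r -> {ffun 'I_k.-1 -> {set F2m m}}}) :
  ~~ doubly_covered tau -> \prod_x \sum_q nu eps p q * cell_weight tau x q = 0.
Proof.
move=> /forallPn [x /forallPn [t /forallPn [j]]].
rewrite negb_imply => /andP [x_in /existsPn x_alone].
suff expect_x0 : \sum_q nu eps p q * cell_weight tau x q = 0.
  by rewrite (bigD1 x) //= expect_x0 mul0r.
rewrite -[RHS](@expect_X_eq0 j.+1); last by have := ltn_ord j; lia.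
apply: eq_bigr => q _; rewrite /cell_weight pair_big (bigD1 (t, j)) //= x_in.
rewrite big1 ?mulr1 // => -[s j'] sj'_tj.
by have /existsPn /(_ j') := x_alone s; rewrite sj'_tj /= => /negbTE ->.
Qed.

Lemma norm_cell_weight_le r (tau : {ffun 'I_r -> {ffun 'I_k.-1 -> {set F2m m}}}) x q :
  0 < nu eps p q ->
  `|cell_weight tau x q| <= \prod_t \prod_j (if x \in tau t j then X_bound else 1).
Proof.
move=> nu_gt0; rewrite normr_prod; apply: ler_prod => t _; rewrite normr_ge0 normr_prod.
apply: ler_prod => j _; rewrite normr_ge0 /=.
case: ifP => _; last by rewrite normr1.
by apply: normX_le_bound => //; have := ltn_ord j; lia.
Qed.

Lemma norm_expect_cells_le r (tau : {ffun 'I_r -> {ffun 'I_k.-1 -> {set F2m m}}}) :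
  (0 < k)%N -> (forall t, tau t \in orbit_tuples S) ->
  `|\prod_x \sum_q nu eps p q * cell_weight tau x q|
    <= X_bound ^+ (r * 2 ^ span_dim (\bigcup_(j < k.-1) S j)).
Proof.
move=> k_gt0 tau_orb; have B_ge1 := X_bound_ge1 k_gt0.
set cellB := fun x => \prod_t \prod_j (if x \in tau t j then X_bound else 1).
apply: (@le_trans _ _ (\prod_x cellB x)).
  rewrite normr_prod; apply: ler_prod => x _; rewrite normr_ge0 /=.
  rewrite -[cellB x]mul1r -sum_nu mulr_suml.
  apply: le_trans (ler_norm_sum _ _ _) (ler_sum _ _) => q _.
  rewrite normrM ger0_norm ?nu_ge0 //; have := nu_ge0 q.
  rewrite le_eqVlt => /orP [/eqP <- | nu_gt0]; first by rewrite !mul0r.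
  by rewrite ler_wpM2l ?nu_ge0 ?norm_cell_weight_le.
rewrite /cellB exchange_big /=.
under eq_bigr => t _ do rewrite exchange_big /=.
under eq_bigr => t _ do under eq_bigr => j _ do rewrite -big_mkcond prodr_const.
under eq_bigr => t _ do rewrite prodrXr.
rewrite prodrXr ler_weXn2l //.
apply: (@leq_trans (\sum_(t < r) 2 ^ span_dim (\bigcup_(j < k.-1) S j))%N).
  by apply: leq_sum => t _; apply: sum_card_orbit_tuple_le.
by rewrite sum_nat_const card_ord.
Qed.

Lemma iid_expect_X_orbit_expn_le r : (0 < k)%N ->
  iid_expect eps p (fun w => X_orbit X S w ^+ r)
    <= #|covered_orbit_tuples S r|%:R
       * X_bound ^+ (r * 2 ^ span_dim (\bigcup_(j < k.-1) S j)).
Proof.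
move=> k_gt0; rewrite iid_expect_X_orbit_expn (bigID (@doubly_covered m k.-1 r)) /=.
rewrite [X in _ + X]big1 ?addr0 => [|tau /andP [_]]; last exact: expect_cells_eq0.
rewrite mulr_natl -sumr_const.
rewrite [leLHS](eq_bigl (fun tau => tau \in covered_orbit_tuples S r)) => [|tau]; last first.
  by rewrite /covered_orbit_tuples inE.
apply: ler_sum => tau; rewrite /covered_orbit_tuples inE => /andP [/forallP tau_orb _].
exact: le_trans (ler_norm _) (norm_expect_cells_le k_gt0 tau_orb).
Qed.

End OrbitMoments.

Theorem lemma13 (R : realFieldType) (L : finType) (eps p : L -> R)
  (Heps : forall l, 0 <= eps l <= 1 / 2) (Hinj : injective eps)
  (Hp : forall l, 0 < p l) (Hp1 : \sum_l p l = 1)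
  (k : nat) (Hk : k = #|[set q : L * bool | 0 < nu eps p q]|)
  (X : nat -> L * bool -> R)
  (HX0 : forall q, 0 < nu eps p q -> X 0%N q = 1)
  (Horth : forall i j, (i < k)%N -> (j < k)%N ->
     \sum_(q : L * bool) nu eps p q * X i q * X j q = (i == j)%:R)
  (m : nat) (Hm : (0 < m)%N)
  (S : {ffun 'I_k.-1 -> {set F2m m}})
  (Hdisj : forall i j, i != j -> [disjoint S i & S j]) :
  let d := span_dim (\bigcup_(j < k.-1) S j) in
  let B := \big[Num.max/0]_(i < k)
             \big[Num.max/0]_(q : L * bool | 0 < nu eps p q) `|X i q| in
  iid_expect eps p (fun w => X_orbit X S w ^+ 4)
    <= 2 ^+ (2 * d * m + 8 * d ^ 2) * B ^+ (2 ^ (d + 2)).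
Proof.
cbv zeta; set d := span_dim _; set B := \big[Num.max/0]_(i < k) _.
have [q0 nu_q0] := exists_nu_gt0 eps Hp1.
have k_gt0 : (0 < k)%N by rewrite Hk; apply/card_gt0P; exists q0; rewrite inE.
apply: le_trans (iid_expect_X_orbit_expn_le Heps Hp Hp1 HX0 Horth Hdisj 4 k_gt0) _.
have B_ge0 : 0 <= B by apply: le_trans ler01 (X_bound_ge1 Hp1 HX0 k_gt0).
have -> : (4 * 2 ^ d = 2 ^ (d + 2))%N by rewrite expnD mulnC.
rewrite ler_wpM2r ?exprn_ge0 // -natrX ler_nat.
apply: leq_trans (card_covered_orbit_tuples Hdisj (w := 2 * d) _) _; rewrite -/d.
  lia.
by apply: eq_leq; congr (_ ^ _)%N; nia.
Qed.
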